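(* Let $H$ be a Hopf algebra, flat as a $k$-module, $A$ a left $H$-comodule algebra and $B=A^{\mathrm{co}H}$. If $A$ is a separable extension of $B$, then the induction functor $H\otimes-:\mathcal M_A\to{}^H\mathcal M_A$ is separable. If $A/B$ is a Hopf Galois extension, the converse holds as well.
   Context: $k$ commutative ring; $\rho_A(a)=\sum a_{<-1>}\otimes a_{<0>}$. $A^{\mathrm{co}H}=\{a\in A:\rho_A(a)=1\otimes a\}$. ${}^H\mathcal M_A$ is the category of right $A$-modules $M$ with a left $H$-coaction such that $\rho_M(ma)=\sum m_{<-1>}a_{<-1>}\otimes m_{<0>}a_{<0>}$, with $A$-linear $H$-colinear maps. The induction functor sends $N\in\mathcal M_A$ to $H\otimes N$ with $(h\otimes n)a=\sum ha_{<-1>}\otimes na_{<0>}$ and $\rho(h\otimes n)=\sum h_{(1)}\otimes h_{(2)}\otimes n$. $A/B$ is a separable extension if there is $e=\sum e^1\otimes e^2\in A\otimes_B A$ with $\sum ae^1\otimes e^2=\sum e^1\otimes e^2a$ for all $a$ and $\sum e^1e^2=1$. $A/B$ is Hopf Galois if $A\otimes_BA\to H\otimes A$, $a\otimes b\mapsto\sum a_{<-1>}\otimes a_{<0>}b$, is bijective. A functor is separable if $\mathrm{Hom}(M,N)\to\mathrm{Hom}(FM,FN)$ has a left inverse natural in $M,N$. *)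

From HB Require Import structures.
From mathcomp Require Import all_boot all_algebra.
From mathcomp Require Import boolp.

Set Implicit Arguments.
Unset Strict Implicit.
Unset Printing Implicit Defensive.

Import GRing.Theory.
Local Open Scope ring_scope.

Definition klinear (k : pzRingType) (U V : lmodType k) (f : U -> V) : Prop :=
  forall (c : k) (u u' : U), f (c *: u + u') = c *: f u + f u'.

Definition kbilinear (k : pzRingType) (U V W : lmodType k) (f : U -> V -> W)
  : Prop := (forall v, klinear (fun u => f u v)) /\ (forall u, klinear (f u)).

Lemma klinear0 (k : pzRingType) (U V : lmodType k) (f : U -> V) :
  klinear f -> f 0 = 0.
Proof.
move=> hf; have := hf (-1) 0 0.
by rewrite scaler0 addr0 scaleN1r addNr.
Qed.

Lemma klinearZ (k : pzRingType) (U V : lmodType k) (f : U -> V) c u :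
  klinear f -> f (c *: u) = c *: f u.
Proof. by move=> hf; have := hf c u 0; rewrite !addr0 (klinear0 hf) addr0. Qed.

(* The tensor product U (x)_k V of two k-modules.                           *)
(* Elements are classes of finite formal sums  sum_i u_i (x) v_i  (lists of *)
(* pairs); two formal sums are identified iff every k-bilinear map agrees on *)
(* them.  This is (a construction of) the usual tensor product.             *)

Section Tensor.
Variables (k : comPzRingType) (U V : lmodType k).

Definition tsum (W : lmodType k) (f : U -> V -> W) (s : seq (U * V)) : W :=
  \sum_(p <- s) f p.1 p.2.

Definition teqv (s t : seq (U * V)) : Prop :=
  forall (W : lmodType k) (f : U -> V -> W), kbilinear f -> tsum f s = tsum f t.

Definition tensor_type := {X : seq (U * V) -> Prop | exists s, X = teqv s}.

Definition tclass (s : seq (U * V)) : tensor_type :=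
  exist _ (teqv s) (ex_intro _ s erefl).

Definition trep (x : tensor_type) : seq (U * V) := projT1 (cid (proj2_sig x)).

Lemma trep_spec x : proj1_sig x = teqv (trep x).
Proof. by rewrite /trep; case: (cid _). Qed.

Lemma tensor_eq (x y : tensor_type) : proj1_sig x = proj1_sig y -> x = y.
Proof.
case: x y => X hX [Y hY] /= e; move: hX hY; rewrite e => hX hY.
by rewrite (Prop_irrelevance hX hY).
Qed.

Lemma tclassK x : tclass (trep x) = x.
Proof. by apply: tensor_eq; rewrite /= -trep_spec. Qed.

Lemma teqv_refl s : teqv s s. Proof. by []. Qed.
Lemma teqv_sym s t : teqv s t -> teqv t s.
Proof. by move=> h W f hf; rewrite (h W f hf). Qed.
Lemma teqv_trans s t u : teqv s t -> teqv t u -> teqv s u.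
Proof. by move=> h1 h2 W f hf; rewrite (h1 W f hf) (h2 W f hf). Qed.

Lemma tclass_eq s t : teqv s t -> tclass s = tclass t.
Proof.
move=> h; apply: tensor_eq => /=.
apply/funext => u; apply/propext; split => h'.
  exact: teqv_trans (teqv_sym h) h'.
exact: teqv_trans h h'.
Qed.

Lemma teqv_rep s : teqv (trep (tclass s)) s.
Proof.
have := trep_spec (tclass s) => /= e.
by rewrite -e; apply: teqv_refl.
Qed.

Lemma tsum_cat (W : lmodType k) (f : U -> V -> W) s t : tsum f (s ++ t) = tsum f s + tsum f t.
Proof. by rewrite /tsum big_cat. Qed.

Definition negl (p : U * V) : U * V := (- p.1, p.2).
Definition scll (a : k) (p : U * V) : U * V := (a *: p.1, p.2).

Lemma tsum_negl (W : lmodType k) (f : U -> V -> W) s : kbilinear f ->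
  tsum f (map negl s) = - tsum f s.
Proof.
move=> [hl _]; rewrite /tsum big_map -sumrN; apply: eq_bigr => p _ /=.
by rewrite -scaleN1r (klinearZ _ _ (hl p.2)) scaleN1r.
Qed.

Lemma tsum_scll (W : lmodType k) (f : U -> V -> W) a s : kbilinear f ->
  tsum f (map (scll a) s) = a *: tsum f s.
Proof.
move=> [hl _]; rewrite /tsum big_map scaler_sumr; apply: eq_bigr => p _ /=.
exact: (klinearZ _ _ (hl p.2)).
Qed.

Definition tzero : tensor_type := tclass [::].
Definition tadd (x y : tensor_type) : tensor_type := tclass (trep x ++ trep y).
Definition topp (x : tensor_type) : tensor_type := tclass (map negl (trep x)).
Definition tscale (a : k) (x : tensor_type) : tensor_type :=
  tclass (map (scll a) (trep x)).

Lemma tsum_rep (W : lmodType k) (f : U -> V -> W) s : kbilinear f ->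
  tsum f (trep (tclass s)) = tsum f s.
Proof. by move=> hf; apply: teqv_rep. Qed.

Lemma tclassP (x : tensor_type) : exists s, x = tclass s.
Proof. by exists (trep x); rewrite tclassK. Qed.

Lemma taddE s t : tadd (tclass s) (tclass t) = tclass (s ++ t).
Proof. by apply: tclass_eq => W f hf; rewrite !tsum_cat !tsum_rep. Qed.

Lemma toppE s : topp (tclass s) = tclass (map negl s).
Proof. by apply: tclass_eq => W f hf; rewrite !tsum_negl ?tsum_rep. Qed.

Lemma tscaleE a s : tscale a (tclass s) = tclass (map (scll a) s).
Proof. by apply: tclass_eq => W f hf; rewrite !tsum_scll ?tsum_rep. Qed.

HB.instance Definition _ := gen_eqMixin tensor_type.
HB.instance Definition _ := gen_choiceMixin tensor_type.

Lemma taddA : associative tadd.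
Proof.
move=> x y z; case: (tclassP x) (tclassP y) (tclassP z) => [s ->] [t ->] [u ->].
by rewrite !taddE catA.
Qed.

Lemma taddC : commutative tadd.
Proof.
move=> x y; case: (tclassP x) (tclassP y) => [s ->] [t ->].
by rewrite !taddE; apply: tclass_eq => W f _; rewrite !tsum_cat addrC.
Qed.

Lemma tadd0 : left_id tzero tadd.
Proof. by move=> x; case: (tclassP x) => [s ->]; rewrite /tzero taddE. Qed.

Lemma taddN : left_inverse tzero topp tadd.
Proof.
move=> x; case: (tclassP x) => [s ->]; rewrite toppE taddE.
by apply: tclass_eq => W f hf; rewrite tsum_cat tsum_negl // addNr /tsum big_nil.
Qed.

HB.instance Definition _ := GRing.isZmodule.Build tensor_type taddA taddC tadd0 taddN.

Lemma tscaleA a b x : tscale a (tscale b x) = tscale (a * b) x.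
Proof.
case: (tclassP x) => [s ->]; rewrite !tscaleE.
by apply: tclass_eq => W f hf; rewrite !tsum_scll // scalerA.
Qed.

Lemma tscale1 : left_id 1 tscale.
Proof.
move=> x; case: (tclassP x) => [s ->]; rewrite !tscaleE.
by apply: tclass_eq => W f hf; rewrite !tsum_scll // scale1r.
Qed.

Lemma tscaleDr : right_distributive tscale tadd.
Proof.
move=> a x y; case: (tclassP x) (tclassP y) => [s ->] [t ->].
rewrite !tscaleE !taddE.
by apply: tclass_eq => W f hf; rewrite map_cat !tsum_cat !tsum_scll // !tsum_rep // scalerDr.
Qed.

Lemma tscaleDl x : {morph tscale^~ x : a b / a + b >-> tadd a b}.
Proof.
move=> a b; case: (tclassP x) => [s ->]; rewrite !tscaleE taddE.
by apply: tclass_eq => W f hf; rewrite !tsum_cat !tsum_scll // scalerDl.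
Qed.

HB.instance Definition _ :=
  GRing.Zmodule_isLmodule.Build k tensor_type tscaleA tscale1 tscaleDr tscaleDl.

Definition tt (u : U) (v : V) : tensor_type := tclass [:: (u, v)].

(* The k-linear map  U (x) V -> W  induced by a k-bilinear map f
   (meaningful only for bilinear f). *)
Definition tlift (W : lmodType k) (f : U -> V -> W) (x : tensor_type) : W :=
  tsum f (trep x).

End Tensor.


Arguments tt {k U V}.
Arguments tlift {k U V W}.

Section Hopf.
Variable k : comPzRingType.

Definition idtens (H N N' : lmodType k) (f : N -> N') :
  tensor_type H N -> tensor_type H N' :=
  tlift (fun h n => tt h (f n)).

Definition tmul (U V : algType k) (x y : tensor_type U V) : tensor_type U V :=
  tlift (fun a b => tlift (fun c d => tt (a * c) (b * d)) y) x.

Definition klinear_form (H : lmodType k) (e : H -> k) : Prop :=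
  forall c x y, e (c *: x + y) = c * e x + e y.

Definition is_hopf_algebra (H : algType k) (Delta : H -> tensor_type H H)
    (eps : H -> k) (S : H -> H) : Prop :=
  [/\ [/\ klinear Delta, klinear_form eps & klinear S],
      (* coassociativity: (Delta (x) id) Delta = (id (x) Delta) Delta *)
      (forall h, tlift (fun a b => tlift (fun c d => tt c (tt d b)) (Delta a))
                       (Delta h)
               = tlift (fun a b => tt a (Delta b)) (Delta h)),
      ((forall h, tlift (fun a b => eps a *: b) (Delta h) = h) /\
       (forall h, tlift (fun a b => eps b *: a) (Delta h) = h)),
      [/\ (forall g h, Delta (g * h) = tmul (Delta g) (Delta h)),
          Delta 1 = tt 1 1,
          (forall g h, eps (g * h) = eps g * eps h) & eps 1 = 1] &
      ((forall h, tlift (fun a b => S a * b) (Delta h) = eps h *: 1) /\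
       (forall h, tlift (fun a b => a * S b) (Delta h) = eps h *: 1))].

Definition kflat (H : lmodType k) : Prop :=
  forall (N N' : lmodType k) (f : N -> N'), klinear f -> injective f ->
    injective (idtens (H:=H) f).

Section ComoduleAlgebra.
Variables (H : algType k) (Delta : H -> tensor_type H H) (eps : H -> k).

Definition is_comodule_algebra (A : algType k) (rho : A -> tensor_type H A)
  : Prop :=
  [/\ klinear rho,
      (forall a, tlift (fun h b => tt h (rho b)) (rho a)
               = tlift (fun h b => tlift (fun h1 h2 => tt h1 (tt h2 b)) (Delta h))
                       (rho a)),
      (forall a, tlift (fun h b => eps h *: b) (rho a) = a),
      (forall a b, rho (a * b) = tmul (rho a) (rho b)) &
      rho 1 = tt 1 1].

Variables (A : algType k) (rho : A -> tensor_type H A).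

Definition coinvariant (a : A) : Prop := rho a = tt 1 a.

Definition rmod_axioms (M : lmodType k) (act : M -> A -> M) : Prop :=
  [/\ (forall a, klinear (fun m => act m a)),
      (forall m, klinear (act m)),
      (forall m a b, act (act m a) b = act m (a * b)) &
      (forall m, act m 1 = m)].

Record rmod := RMod {
  rm_car :> lmodType k;
  rm_act : rm_car -> A -> rm_car;
  rm_ax : rmod_axioms rm_act }.

Definition amod_hom (M N : rmod) (f : M -> N) : Prop :=
  klinear f /\ (forall m a, f (rm_act m a) = rm_act (f m) a).

(* the induction functor H (x) - : M_A -> ^H M_A on objects:
   (h (x) n) a = sum h a_{<-1>} (x) n a_{<0>},  rho(h (x) n) = sum h1 (x) h2 (x) n *)
Definition ind_act (M : rmod) (x : tensor_type H M) (a : A) : tensor_type H M :=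
  tlift (fun h m => tlift (fun h' a' => tt (h * h') (rm_act m a')) (rho a)) x.

Definition ind_coact (M : rmod) (x : tensor_type H M)
  : tensor_type H (tensor_type H M) :=
  tlift (fun h m => tlift (fun h1 h2 => tt h1 (tt h2 m)) (Delta h)) x.

(* morphisms in ^H M_A between induced objects H (x) M -> H (x) N:
   A-linear and H-colinear maps *)
Definition ind_hom (M N : rmod) (phi : tensor_type H M -> tensor_type H N)
  : Prop :=
  [/\ klinear phi,
      (forall x a, phi (ind_act x a) = ind_act (phi x) a) &
      (forall x, ind_coact (phi x) = idtens (H:=H) phi (ind_coact x))].

(* the induction functor H (x) - is separable: there is a family
   P_{M,N} : Hom(H(x)M, H(x)N) -> Hom(M, N), natural in M and N,
   left inverse to f |-> id (x) f *)
Definition ind_separable : Prop :=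
  exists P : forall M N : rmod, (tensor_type H M -> tensor_type H N) -> M -> N,
    [/\ (forall (M N : rmod) phi, ind_hom phi -> amod_hom (P M N phi)),
        (forall (M N : rmod) (f : M -> N), amod_hom f ->
           forall m, P M N (idtens (H:=H) f) m = f m) &
        (forall (M' M N N' : rmod) (g : M' -> M) (h : N -> N') phi,
           amod_hom g -> amod_hom h -> ind_hom phi ->
           forall m, P M' N' (fun x => idtens (H:=H) h (phi (idtens (H:=H) g x))) m
                     = h (P M N phi (g m)))].

(* A (x)_B A, presented by formal sums: two formal sums  sum a_i (x) b_i  are
   equal in A (x)_B A iff every B-balanced biadditive map agrees on them *)
Definition balanced (P : zmodType) (f : A -> A -> P) : Prop :=
  [/\ (forall x x' y, f (x + x') y = f x y + f x' y),
      (forall x y y', f x (y + y') = f x y + f x y') &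
      (forall x b y, coinvariant b -> f (x * b) y = f x (b * y))].

Definition teqvB (s t : seq (A * A)) : Prop :=
  forall (P : zmodType) (f : A -> A -> P), balanced f ->
    \sum_(p <- s) f p.1 p.2 = \sum_(p <- t) f p.1 p.2.

Definition separable_ext : Prop :=
  exists e : seq (A * A),
    (forall a, teqvB [seq (a * p.1, p.2) | p <- e] [seq (p.1, p.2 * a) | p <- e])
    /\ \sum_(p <- e) p.1 * p.2 = 1.

(* the canonical map A (x)_B A -> H (x) A, a (x) b |-> a_{<-1>} (x) a_{<0>} b,
   on formal sums *)
Definition can_map (s : seq (A * A)) : tensor_type H A :=
  \sum_(p <- s) tlift (fun h a => tt h (a * p.2)) (rho p.1).

(* A/B is Hopf Galois: the induced map on A (x)_B A is bijective *)
Definition hopf_galois : Prop :=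
  (forall s t, can_map s = can_map t -> teqvB s t) /\
  (forall x : tensor_type H A, exists s, can_map s = x).

End ComoduleAlgebra.
End Hopf.

From HB Require Import structures.
From mathcomp Require Import all_boot all_algebra.
From mathcomp Require Import boolp.

(** If [e = sum e1 (x) e2] is a separability idempotent of [A/B], then
    [nu_M m = sum (1 (x) m e1) e2] is an [A]-linear section of
    [eps (x) id : H (x) M -> M] natural in [M] ([e] is [B]-balanced and
    centralizes [A]), so [phi |-> (eps (x) id) o phi o nu_M] is a natural
    retraction of [f |-> id (x) f].
    Conversely, a retraction [P] applied to the coaction
    [H (x) A -> H (x) H (x) A], a morphism of relative Hopf modules, gives an
    [A]-linear section of [eps (x) id] on [A]; naturality with respect to left
    multiplications makes its value [x] at [1] satisfy [x a = (1 (x) a) x] and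
    [(eps (x) id) x = 1].  Twisting by the antipode, [y = (S (x) id) x]
    satisfies [rho(a) y = y (1 (x) a)], so the preimage of [y] under the
    Galois map is a separability idempotent. *)

Set Implicit Arguments.
Unset Strict Implicit.
Unset Printing Implicit Defensive.
Import GRing.Theory.
Local Open Scope ring_scope.

Section TensorCalculus.
Variables (k : comPzRingType) (U V : lmodType k).

Lemma tliftE (W : lmodType k) (f : U -> V -> W) x :
  tlift f x = \sum_(p <- trep x) f p.1 p.2.
Proof. by []. Qed.

Lemma tclass_sum (s : seq (U * V)) : tclass s = \sum_(p <- s) tt p.1 p.2.
Proof.
elim: s => [|p s IH]; first by rewrite big_nil.
rewrite big_cons -IH.
change (tclass (p :: s) = tadd (tclass [:: (p.1, p.2)]) (tclass s)).
by rewrite taddE; case: p.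
Qed.

Lemma tlift_tt_id (x : tensor_type U V) : tlift (@tt k U V) x = x.
Proof. by rewrite tliftE -tclass_sum tclassK. Qed.

Lemma kbilinear_tt : kbilinear (@tt k U V).
Proof.
split => [v|u] c u1 u2.
  change (tt (c *: u1 + u2) v = tadd (tscale c (tt u1 v)) (tt u2 v)).
  rewrite /tt tscaleE taddE; apply: tclass_eq => W f [hl hr].
  by rewrite /tsum /= !big_cons !big_nil /= !addr0 (hl v c u1 u2)
             (klinearZ _ _ (hl v)).
change (tt u (c *: u1 + u2) = tadd (tscale c (tt u u1)) (tt u u2)).
rewrite /tt tscaleE taddE; apply: tclass_eq => W f [hl hr].
by rewrite /tsum /= !big_cons !big_nil /= !addr0 (hr u c u1 u2)
           -(klinearZ _ _ (hl u1)).
Qed.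

Lemma tlift_tt (W : lmodType k) (f : U -> V -> W) u v :
  kbilinear f -> tlift f (tt u v) = f u v.
Proof.
by move=> hf; rewrite /tlift (tsum_rep _ hf) /tsum big_cons big_nil addr0.
Qed.

Lemma klinear_tlift (W : lmodType k) (f : U -> V -> W) :
  kbilinear f -> klinear (tlift f).
Proof.
move=> hf c x y; case: (tclassP x) (tclassP y) => [s ->] [t ->].
change (tlift f (tadd (tscale c (tclass s)) (tclass t)) =
        c *: tlift f (tclass s) + tlift f (tclass t)).
by rewrite tscaleE taddE /tlift !(tsum_rep _ hf) tsum_cat tsum_scll.
Qed.

Lemma klinear_ttl (v : V) : klinear (fun u : U => tt u v).
Proof. by case: kbilinear_tt. Qed.

Lemma klinear_ttr (u : U) : klinear (fun v : V => tt u v).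
Proof. by case: kbilinear_tt. Qed.

End TensorCalculus.

Section KLinear.
Variable k : comPzRingType.

Lemma klinearD (U V : lmodType k) (f : U -> V) x y :
  klinear f -> f (x + y) = f x + f y.
Proof. by move=> hf; have := hf 1 x y; rewrite !scale1r. Qed.

Lemma klinear_comp (U V W : lmodType k) (f : U -> V) (g : V -> W) :
  klinear f -> klinear g -> klinear (fun x => g (f x)).
Proof. by move=> hf hg c x y; rewrite hf hg. Qed.

Lemma additive0 (V W : zmodType) (g : V -> W) :
  (forall a b, g (a + b) = g a + g b) -> g 0 = 0.
Proof.
move=> hg; have := hg 0 0; rewrite addr0 => h.
by apply: (@addrI _ (g 0)); rewrite -h addr0.
Qed.

Lemma additive_sum (V W : zmodType) (g : V -> W) I (r : seq I) (F : I -> V) :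
  (forall a b, g (a + b) = g a + g b) ->
  g (\sum_(i <- r) F i) = \sum_(i <- r) g (F i).
Proof.
move=> hg; elim: r => [|i r IH]; first by rewrite !big_nil (additive0 hg).
by rewrite !big_cons hg IH.
Qed.

Lemma klinear_sum (U V : lmodType k) (f : U -> V) I (r : seq I) (F : I -> U) :
  klinear f -> f (\sum_(i <- r) F i) = \sum_(i <- r) f (F i).
Proof. by move=> hf; apply: additive_sum => a b; apply: klinearD. Qed.

Lemma klinear_sumf (U V : lmodType k) I (r : seq I) (F : I -> U -> V) :
  (forall i, klinear (F i)) -> klinear (fun x => \sum_(i <- r) F i x).
Proof.
move=> hF c x y; rewrite scaler_sumr -big_split; apply: eq_bigr => i _.
exact: hF.
Qed.

Variables (U V : lmodType k).

Lemma tlift_comp (W W' : lmodType k) (f : U -> V -> W) (g : W -> W') x :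
  klinear g -> g (tlift f x) = tlift (fun u v => g (f u v)) x.
Proof. by move=> hg; rewrite !tliftE klinear_sum. Qed.

Lemma tlift_scale (W : lmodType k) (f : U -> V -> W) c x :
  tlift (fun u v => c *: f u v) x = c *: tlift f x.
Proof. by rewrite !tliftE scaler_sumr. Qed.

Lemma eq_tlift (W : lmodType k) (f g : U -> V -> W) x :
  (forall u v, f u v = g u v) -> tlift f x = tlift g x.
Proof. by move=> e; rewrite !tliftE; apply: eq_bigr => p _; apply: e. Qed.

Lemma exchange_tlift (U' V' W : lmodType k) (F : U -> V -> U' -> V' -> W) x y :
  tlift (fun u v => tlift (F u v) y) x
  = tlift (fun u' v' => tlift (fun u v => F u v u' v') x) y.
Proof.
by rewrite !tliftE; under eq_bigr do rewrite tliftE; rewrite exchange_big.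
Qed.

Lemma klinear_tlift_param (X W : lmodType k) (F : X -> U -> V -> W) x :
  (forall u v, klinear (fun z => F z u v)) -> klinear (fun z => tlift (F z) x).
Proof.
move=> hF c z z'; rewrite !tliftE scaler_sumr -big_split.
by apply: eq_bigr => p _; apply: hF.
Qed.

Lemma tlift_tlift (U' V' W : lmodType k) (K : U' -> V' -> W)
    (L : U -> V -> tensor_type U' V') x :
  kbilinear K -> tlift K (tlift L x) = tlift (fun u v => tlift K (L u v)) x.
Proof. by move=> hK; apply/tlift_comp/klinear_tlift. Qed.

Lemma ttDl c (u u' : U) (v : V) : tt (c *: u + u') v = c *: tt u v + tt u' v.
Proof. exact: klinear_ttl. Qed.
Lemma ttDr c (u : U) (v v' : V) : tt u (c *: v + v') = c *: tt u v + tt u v'.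
Proof. exact: klinear_ttr. Qed.
Lemma ttZl c (u : U) (v : V) : tt (c *: u) v = c *: tt u v.
Proof. exact: klinearZ _ _ (klinear_ttl _). Qed.
Lemma ttZr c (u : U) (v : V) : tt u (c *: v) = c *: tt u v.
Proof. exact: klinearZ _ _ (klinear_ttr _). Qed.
Lemma ttAr (u : U) (v v' : V) : tt u (v + v') = tt u v + tt u v'.
Proof. exact: klinearD _ _ (klinear_ttr _). Qed.

End KLinear.

Lemma klinear_tlift_tlift_param (k : comPzRingType) (U V U' V' X W : lmodType k)
    (F : X -> U -> V -> U' -> V' -> W) (L : U -> V -> tensor_type U' V') x :
  (forall u v u' v', klinear (fun z => F z u v u' v')) ->
  klinear (fun z => tlift (fun u v => tlift (F z u v) (L u v)) x).
Proof.
move=> hF; apply: (klinear_tlift_param (F := fun z u v => tlift (F z u v) (L u v))).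
by move=> u v; apply: (klinear_tlift_param (F := fun z => F z u v)).
Qed.

Section RightModule.
Variables (k : comPzRingType) (A : algType k) (M : rmod A).
Local Notation act := (@rm_act k A M).

Lemma klinear_actl a : klinear (fun m : M => act m a).
Proof. by case: (rm_ax M). Qed.
Lemma klinear_actr (m : M) : klinear (act m).
Proof. by case: (rm_ax M). Qed.
Lemma actA (m : M) a b : act (act m a) b = act m (a * b).
Proof. by case: (rm_ax M). Qed.
Lemma act1 (m : M) : act m 1 = m.
Proof. by case: (rm_ax M). Qed.
Lemma actDl c (m m' : M) a : act (c *: m + m') a = c *: act m a + act m' a.
Proof. exact: klinear_actl. Qed.
Lemma actDr c (m : M) a a' : act m (c *: a + a') = c *: act m a + act m a'.
Proof. exact: klinear_actr. Qed.
Lemma actZl c (m : M) a : act (c *: m) a = c *: act m a.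
Proof. exact: klinearZ (klinear_actl a). Qed.
Lemma actZr c (m : M) a : act m (c *: a) = c *: act m a.
Proof. exact: klinearZ (klinear_actr m). Qed.
Lemma actAr (m : M) a a' : act m (a + a') = act m a + act m a'.
Proof. exact: klinearD (klinear_actr m). Qed.

End RightModule.

Section RegularModule.
Variables (k : comPzRingType) (A : algType k).

Lemma klinear_mulr (z : A) : klinear (fun x : A => x * z).
Proof. by move=> c x y; rewrite mulrDl scalerAl. Qed.

Lemma klinear_mull (z : A) : klinear (fun x : A => z * x).
Proof. by move=> c x y; rewrite mulrDr scalerAr. Qed.

Lemma regular_rmod_axioms : @rmod_axioms k A A (fun m a => m * a).
Proof.
split=> [a|m|m a b|m]; [exact: klinear_mulr | exact: klinear_mull | |].
  by rewrite mulrA.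
by rewrite mulr1.
Qed.

Definition regular_rmod : rmod A := RMod regular_rmod_axioms.

Lemma amod_hom_id (M : rmod A) : amod_hom (fun z : M => z).
Proof. by []. Qed.

Lemma amod_hom_mull (a : A) :
  amod_hom (M := regular_rmod) (N := regular_rmod) (fun y : A => a * y).
Proof. by split=> [|u b]; [exact: klinear_mull | rewrite /= mulrA]. Qed.

End RegularModule.

Section IdTensor.
Variables (k : comPzRingType) (H M N : lmodType k) (f : M -> N).

Lemma idtens_id : idtens (H:=H) (fun z : M => z) = (fun x => x).
Proof. by apply: funext => x; rewrite /idtens tlift_tt_id. Qed.

Hypothesis hf : klinear f.

Lemma kbilinear_tt_map : kbilinear (fun (h : H) (n : M) => tt h (f n)).
Proof. by split => [n|h] c x y; rewrite ?ttDl // hf ttDr. Qed.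

Lemma idtens_tt h n : idtens (H:=H) f (tt h n) = tt h (f n).
Proof. exact: tlift_tt kbilinear_tt_map. Qed.

Lemma klinear_idtens : klinear (idtens (H:=H) f).
Proof. exact: klinear_tlift kbilinear_tt_map. Qed.

End IdTensor.

Section HopfComodule.
Variables (k : comPzRingType) (H : algType k) (Delta : H -> tensor_type H H).
Variables (eps : H -> k) (S : H -> H).
Variables (A : algType k) (rho : A -> tensor_type H A).
Hypothesis Delta_lin : klinear Delta.
Hypothesis eps_lin : klinear_form eps.
Hypothesis S_lin : klinear S.
Hypothesis coass : forall h,
  tlift (fun a b => tlift (fun c d => tt c (tt d b)) (Delta a)) (Delta h)
  = tlift (fun a b => tt a (Delta b)) (Delta h).
Hypothesis counitL : forall h, tlift (fun a b => eps a *: b) (Delta h) = h.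
Hypothesis counitR : forall h, tlift (fun a b => eps b *: a) (Delta h) = h.
Hypothesis Delta_mul : forall g h, Delta (g * h) = tmul (Delta g) (Delta h).
Hypothesis eps_mul : forall g h, eps (g * h) = eps g * eps h.
Hypothesis eps_one : eps 1 = 1.
Hypothesis antiL : forall h, tlift (fun a b => S a * b) (Delta h) = eps h *: 1.
Hypothesis antiR : forall h, tlift (fun a b => a * S b) (Delta h) = eps h *: 1.
Hypothesis rho_lin : klinear rho.
Hypothesis rho_coass : forall a, tlift (fun h b => tt h (rho b)) (rho a)
  = tlift (fun h b => tlift (fun h1 h2 => tt h1 (tt h2 b)) (Delta h)) (rho a).
Hypothesis rho_counit : forall a, tlift (fun h b => eps h *: b) (rho a) = a.
Hypothesis rho_mul : forall a b, rho (a * b) = tmul (rho a) (rho b).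
Hypothesis rho_one : rho 1 = tt 1 1.

(** * The induction functor *)

Definition eps_tens (M : lmodType k) : tensor_type H M -> M :=
  tlift (fun h n => eps h *: n).

Lemma kbilinear_eps_scale (M : lmodType k) :
  kbilinear (fun (h : H) (n : M) => eps h *: n).
Proof.
split => [n|h] c x y /=; first by rewrite eps_lin scalerDl scalerA.
by rewrite scalerDr !scalerA mulrC.
Qed.

Lemma klinear_eps_tens M : klinear (@eps_tens M).
Proof. exact: klinear_tlift (kbilinear_eps_scale M). Qed.

Lemma eps_tens_tt (M : lmodType k) h (n : M) : eps_tens (tt h n) = eps h *: n.
Proof. exact: tlift_tt (kbilinear_eps_scale M). Qed.

Lemma eps_tens_idtens (M N : lmodType k) (f : M -> N) y : klinear f ->
  eps_tens (idtens (H:=H) f y) = f (eps_tens y).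
Proof.
move=> hf; rewrite /idtens (tlift_comp _ _ (klinear_eps_tens (M:=N))) /eps_tens.
rewrite (tlift_comp _ _ hf); apply: eq_tlift => h n.
by rewrite -/(eps_tens _) eps_tens_tt (klinearZ _ _ hf).
Qed.

Lemma epsD x y : eps (x + y) = eps x + eps y.
Proof. by have := eps_lin 1 x y; rewrite scale1r mul1r. Qed.

Lemma epsZ c x : eps (c *: x) = c * eps x.
Proof. by have := eps_lin c x 0; rewrite addr0 (additive0 epsD) addr0. Qed.

Section OnModule.
Variable M : rmod A.
Local Notation act := (@rm_act k A M).

Lemma kbilinear_tt_mul_act (h : H) (m : M) :
  kbilinear (fun (h' : H) (a' : A) => tt (h * h') (act m a')).
Proof.
split => [a'|h'] c x y /=; first by rewrite mulrDr -scalerAr ttDl.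
by rewrite actDr ttDr.
Qed.

Definition ind_act_pure a (h : H) (m : M) :=
  tlift (fun h' a' => tt (h * h') (act m a')) (rho a).

Lemma kbilinear_ind_act_pure a : kbilinear (ind_act_pure a).
Proof.
split => [m|h] c x y; rewrite /ind_act_pure.
  apply: (klinear_tlift_param (F := fun z h' a' => tt (z * h') (act m a'))).
  by move=> h' a' c' z z' /=; rewrite mulrDl -scalerAl ttDl.
apply: (klinear_tlift_param (F := fun z h' a' => tt (h * h') (act z a'))).
by move=> h' a' c' z z' /=; rewrite actDl ttDr.
Qed.

Lemma ind_actE x a : ind_act rho (M:=M) x a = tlift (ind_act_pure a) x.
Proof. by []. Qed.

Lemma ind_act_tt a h (m : M) : ind_act rho (tt h m) a = ind_act_pure a h m.
Proof. exact: tlift_tt (kbilinear_ind_act_pure a). Qed.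

Lemma klinear_ind_actl a : klinear (fun x => ind_act rho (M:=M) x a).
Proof. exact: klinear_tlift (kbilinear_ind_act_pure a). Qed.

Lemma klinear_ind_actr x : klinear (ind_act rho (M:=M) x).
Proof.
apply: (klinear_tlift_param (F := fun z h m => ind_act_pure z h m)).
move=> h m c a a'; rewrite /ind_act_pure rho_lin.
exact: (klinear_tlift (kbilinear_tt_mul_act h m)).
Qed.

Lemma ind_actA x a b :
  ind_act rho (ind_act rho (M:=M) x a) b = ind_act rho x (a * b).
Proof.
rewrite (ind_actE x a) (tlift_comp _ _ (klinear_ind_actl b)) ind_actE.
apply: eq_tlift => h m.
rewrite {1}/ind_act_pure (tlift_comp _ _ (klinear_ind_actl b)).
rewrite /ind_act_pure rho_mul /tmul (tlift_tlift _ _ (kbilinear_tt_mul_act h m)).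
apply: eq_tlift => u v; rewrite ind_act_tt.
rewrite (tlift_tlift _ _ (kbilinear_tt_mul_act h m)); apply: eq_tlift => u' v'.
by rewrite (tlift_tt _ _ (kbilinear_tt_mul_act h m)) mulrA actA.
Qed.

Lemma ind_act1 x : ind_act rho (M:=M) x 1 = x.
Proof.
rewrite /ind_act -{2}(tlift_tt_id x); apply: eq_tlift => h m.
by rewrite rho_one (tlift_tt _ _ (kbilinear_tt_mul_act h m)) mulr1 act1.
Qed.

Lemma ind_act_coinvariant (n : M) b : coinvariant rho b ->
  ind_act rho (tt 1 n) b = tt 1 (act n b).
Proof.
move=> hb; rewrite ind_act_tt /ind_act_pure hb.
by rewrite (tlift_tt _ _ (kbilinear_tt_mul_act 1 n)) mulr1.
Qed.

Lemma eps_tens_ind_act x a :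
  eps_tens (ind_act rho (M:=M) x a) = act (eps_tens x) a.
Proof.
rewrite /ind_act (tlift_comp _ _ (klinear_eps_tens (M:=M))) /eps_tens.
rewrite (tlift_comp _ _ (klinear_actl a)); apply: eq_tlift => h m.
rewrite -/(eps_tens _) (tlift_comp _ _ (klinear_eps_tens (M:=M))).
rewrite actZl -[in RHS](rho_counit a) (tlift_comp _ _ (klinear_actr m)).
rewrite -tlift_scale; apply: eq_tlift => u v.
by rewrite eps_tens_tt eps_mul -scalerA actZr.
Qed.

Lemma ind_rmod_axioms :
  rmod_axioms (fun (x : tensor_type H M) a => ind_act rho x a).
Proof.
split; [exact: klinear_ind_actl | exact: klinear_ind_actr | exact: ind_actA |].
exact: ind_act1.
Qed.

Definition ind_rmod : rmod A := RMod ind_rmod_axioms.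

Lemma amod_hom_eps_tens :
  amod_hom (M := ind_rmod) (N := M) (eps_tens (M:=M)).
Proof.
split=> [|x a]; first exact: klinear_eps_tens.
by rewrite /= eps_tens_ind_act.
Qed.

End OnModule.

Lemma idtens_ind_act (M N : rmod A) (f : M -> N) x a : amod_hom f ->
  idtens (H:=H) f (ind_act rho x a) = ind_act rho (idtens (H:=H) f x) a.
Proof.
case=> hf hfa.
rewrite ind_actE (tlift_comp _ _ (klinear_idtens hf)).
rewrite [idtens _ x]/idtens (tlift_comp _ _ (klinear_ind_actl a)).
apply: eq_tlift => h m; rewrite ind_act_tt /ind_act_pure.
rewrite /idtens (tlift_tlift _ _ (kbilinear_tt_map _ hf)); apply: eq_tlift => h' a'.
by rewrite (tlift_tt _ _ (kbilinear_tt_map _ hf)) hfa.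
Qed.

Lemma amod_hom_idtens (M N : rmod A) (g : M -> N) : amod_hom g ->
  amod_hom (M := ind_rmod M) (N := ind_rmod N) (idtens (H:=H) g).
Proof.
move=> hg; split=> [|x a]; first by case: hg => hl _; exact: klinear_idtens.
by rewrite /= idtens_ind_act.
Qed.

(** * Separable extensions *)

Section IdempotentSection.
Variable e : seq (A * A).

Definition idempotent_section (M : rmod A) (m : M) : tensor_type H M :=
  \sum_(p <- e) ind_act rho (tt 1 (rm_act m p.1)) p.2.

Lemma klinear_idempotent_section (M : rmod A) : klinear (@idempotent_section M).
Proof.
apply: klinear_sumf => p.
exact: klinear_comp (klinear_comp (klinear_actl _) (klinear_ttr _))
                    (klinear_ind_actl _).
Qed.

Lemma eps_tens_idempotent_section (M : rmod A) (m : M) :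
  \sum_(p <- e) p.1 * p.2 = 1 -> eps_tens (idempotent_section m) = m.
Proof.
move=> hsum.
rewrite /idempotent_section (klinear_sum _ _ (klinear_eps_tens (M:=M))).
under eq_bigr do
  rewrite eps_tens_ind_act eps_tens_tt eps_one scale1r actA.
by rewrite -(additive_sum _ _ (actAr m)) hsum act1.
Qed.

Lemma idempotent_section_act (M : rmod A) (m : M) a :
  (forall a, teqvB rho [seq (a * p.1, p.2) | p <- e]
                       [seq (p.1, p.2 * a) | p <- e]) ->
  idempotent_section (rm_act m a) = ind_act rho (idempotent_section m) a.
Proof.
move=> hsep.
pose f x y := ind_act rho (tt (1 : H) (rm_act m x)) y.
have bal : balanced rho f.
  split=> [x x' y|x y y'|x b y hb]; rewrite /f.
  - by rewrite actAr ttAr (klinearD _ _ (klinear_ind_actl _)).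
  - by rewrite (klinearD _ _ (klinear_ind_actr _)).
  - by rewrite -ind_actA (ind_act_coinvariant _ hb) actA.
have := hsep a _ f bal; rewrite !big_map /= => hbal.
rewrite /idempotent_section (klinear_sum _ _ (klinear_ind_actl _)).
transitivity (\sum_(p <- e) f (a * p.1) p.2).
  by apply: eq_bigr => p _; rewrite /f actA.
by rewrite hbal; apply: eq_bigr => p _; rewrite /f ind_actA.
Qed.

Lemma idempotent_section_natural (M N : rmod A) (g : M -> N) (m : M) :
  amod_hom g -> idtens (H:=H) g (idempotent_section m) = idempotent_section (g m).
Proof.
move=> hg; case: (hg) => hl ha.
rewrite /idempotent_section (klinear_sum _ _ (klinear_idtens hl)).
by apply: eq_bigr => p _; rewrite idtens_ind_act // idtens_tt // ha.
Qed.

End IdempotentSection.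

Lemma separable_ext_ind_separable : separable_ext rho -> ind_separable Delta rho.
Proof.
case=> e [hsep hsum].
exists (fun M N phi m => eps_tens (phi (idempotent_section e m))).
split.
- move=> M N phi [hphi hphia _]; split.
    exact: klinear_comp (klinear_idempotent_section e (M:=M))
                        (klinear_comp hphi (klinear_eps_tens (M:=N))).
  by move=> m a; rewrite idempotent_section_act // hphia eps_tens_ind_act.
- move=> M N f [hf _] m.
  by rewrite eps_tens_idtens // eps_tens_idempotent_section.
- move=> M' M N N' g h phi hg [hh _] _ m.
  by rewrite eps_tens_idtens // idempotent_section_natural.
Qed.

(** * The antipode *)

Lemma coassoc_tlift (X : lmodType k) (T : H -> H -> H -> X) h :
  (forall c, kbilinear (T c)) -> (forall d b, klinear (fun c => T c d b)) ->
  tlift (fun a b => tlift (fun c d => T c d b) (Delta a)) (Delta h)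
  = tlift (fun a b => tlift (T a) (Delta b)) (Delta h).
Proof.
move=> hTl hTr.
have hW : kbilinear (fun (g : H) (y : tensor_type H H) => tlift (T g) y).
  split => [y|g]; last exact: klinear_tlift.
  by apply: (klinear_tlift_param (F := fun z c' d' => T z c' d')) => u v.
have := congr1 (tlift (fun g y => tlift (T g) y)) (coass h).
rewrite !(tlift_comp _ _ (klinear_tlift hW)) => hcoass.
transitivity (tlift (fun a b => tlift (fun g y => tlift (T g) y)
                 (tlift (fun c d => tt c (tt d b)) (Delta a))) (Delta h)).
  apply: eq_tlift => a b; rewrite (tlift_comp _ _ (klinear_tlift hW)).
  by apply: eq_tlift => c d; rewrite (tlift_tt _ _ hW) (tlift_tt _ _ (hTl c)).
by rewrite hcoass; apply: eq_tlift => a b; rewrite (tlift_tt _ _ hW).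
Qed.

Ltac linsimp :=
  do 8 rewrite ?S_lin ?mulrDl ?mulrDr -?scalerAl -?scalerAr ?ttDl ?ttDr.

(* Summing [S (c c') d d' S b' S b] over [Delta^2 g = c (x) d (x) b] and
   [Delta^2 h = c' (x) d' (x) b'] in the two ways allowed by coassociativity
   gives [S h * S g] and [S (g * h)]. *)
Definition antipode_mul_term (c d b c' d' b' : H) :=
  S (c * c') * d * d' * S b' * S b.

Lemma antipode_mul_term_coass (g h : H) :
  tlift (fun a b => tlift (fun c d => tlift (fun a' b' => tlift (fun c' d' =>
      antipode_mul_term c d b c' d' b') (Delta a')) (Delta h)) (Delta a)) (Delta g)
  = tlift (fun a b => tlift (fun c d => tlift (fun a' b' => tlift (fun c' d' =>
      antipode_mul_term a c d a' c' d') (Delta b')) (Delta h)) (Delta b)) (Delta g).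
Proof.
rewrite (coassoc_tlift (T := fun c d b => tlift (fun a' b' => tlift (fun c' d' =>
      antipode_mul_term c d b c' d' b') (Delta a')) (Delta h))).
- apply: eq_tlift => a b; apply: eq_tlift => c d.
  rewrite (coassoc_tlift (T := fun c' d' b' => antipode_mul_term a c d c' d' b')) //.
  + by move=> c'; split => [b'|d'] x u v; rewrite /antipode_mul_term; linsimp.
  + by move=> d' b' x u v; rewrite /antipode_mul_term; linsimp.
- move=> c; split => [b|d] x u v.
  + apply: (klinear_tlift_tlift_param (F := fun z a' b' c' d' =>
      antipode_mul_term c z b c' d' b')) => a' b' c' d' y w w'.
    by rewrite /antipode_mul_term; linsimp.
  + apply: (klinear_tlift_tlift_param (F := fun z a' b' c' d' =>
      antipode_mul_term c d z c' d' b')) => a' b' c' d' y w w'.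
    by rewrite /antipode_mul_term; linsimp.
- move=> d b x u v.
  apply: (klinear_tlift_tlift_param (F := fun z a' b' c' d' =>
    antipode_mul_term z d b c' d' b')) => a' b' c' d' y w w'.
  by rewrite /antipode_mul_term; linsimp.
Qed.

Lemma kbilinear_antipode_mul : kbilinear (fun x y : H => S x * y).
Proof. by split => [y|x] c u v; linsimp. Qed.

Lemma antipode_counit h : S h = tlift (fun a b => eps a *: S b) (Delta h).
Proof.
rewrite -{1}(counitL h) (tlift_comp _ _ S_lin).
by apply: eq_tlift => a b; rewrite (klinearZ _ _ S_lin).
Qed.

Lemma sum_antipode_mul_term_left (g h : H) :
  tlift (fun a b => tlift (fun c d => tlift (fun a' b' => tlift (fun c' d' =>
      antipode_mul_term c d b c' d' b') (Delta a')) (Delta h)) (Delta a)) (Delta g)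
  = S h * S g.
Proof.
rewrite [S g]antipode_counit (tlift_comp _ _ (klinear_mull _)).
apply: eq_tlift => a b.
rewrite [S h]antipode_counit (tlift_comp _ _ (klinear_mulr _)).
rewrite exchange_tlift; apply: eq_tlift => a' b'.
transitivity (tlift (fun c d => tlift (fun c' d' => S (c * c') * (d * d'))
                (Delta a')) (Delta a) * S b' * S b).
  rewrite (tlift_comp _ _ (klinear_mulr _)) (tlift_comp _ _ (klinear_mulr _)).
  apply: eq_tlift => c d.
  rewrite (tlift_comp _ _ (klinear_mulr _)) (tlift_comp _ _ (klinear_mulr _)).
  by apply: eq_tlift => c' d'; rewrite /antipode_mul_term !mulrA.
have -> : tlift (fun c d => tlift (fun c' d' => S (c * c') * (d * d'))
            (Delta a')) (Delta a) = eps (a * a') *: 1.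
  rewrite -antiL Delta_mul /tmul (tlift_tlift _ _ kbilinear_antipode_mul).
  apply: eq_tlift => c d; rewrite (tlift_tlift _ _ kbilinear_antipode_mul).
  by apply: eq_tlift => c' d'; rewrite (tlift_tt _ _ kbilinear_antipode_mul).
by rewrite eps_mul mulr_algl -scalerAl -scalerAr -scalerAl scalerA mulrC.
Qed.

Lemma sum_antipode_mul_term_right (g h : H) :
  tlift (fun a b => tlift (fun c d => tlift (fun a' b' => tlift (fun c' d' =>
      antipode_mul_term a c d a' c' d') (Delta b')) (Delta h)) (Delta b)) (Delta g)
  = S (g * h).
Proof.
rewrite -{2}(counitR g) (tlift_comp _ _ (klinear_mulr _)) (tlift_comp _ _ S_lin).
apply: eq_tlift => a b.
rewrite -{2}(counitR h) (tlift_comp _ _ (klinear_mull _)) (tlift_comp _ _ S_lin).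
rewrite exchange_tlift; apply: eq_tlift => a' b'.
transitivity (tlift (fun c d => eps b' *: (S (a * a') * (c * S d))) (Delta b)).
  apply: eq_tlift => c d.
  transitivity ((fun z => S (a * a') * c * z * S d)
                  (tlift (fun c' d' => c' * S d') (Delta b'))).
    rewrite (tlift_comp (fun c' d' => c' * S d') _
               (g := fun z => S (a * a') * c * z * S d)).
      by apply: eq_tlift => c' d'; rewrite /antipode_mul_term !mulrA.
    by move=> x u v; linsimp.
  by rewrite /= antiR -scalerAr -scalerAl mulr1 mulrA.
rewrite tlift_scale -(tlift_comp _ _ (klinear_mull (S (a * a')))) antiR.
by rewrite mulr_algr scalerA -scalerAl -scalerAr (klinearZ _ _ S_lin)
           (klinearZ _ _ S_lin) scalerA mulrC.
Qed.

Lemma antipodeM (g h : H) : S (g * h) = S h * S g.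
Proof.
by rewrite -sum_antipode_mul_term_right -antipode_mul_term_coass
           sum_antipode_mul_term_left.
Qed.

Lemma eps_antipode h : eps (S h) = eps h.
Proof.
have := congr1 eps (antiL h); rewrite epsZ eps_one mulr1 => <-.
rewrite -{1}(counitR h) !tliftE (klinear_sum _ _ S_lin) !(additive_sum _ _ epsD).
by apply: eq_bigr => p _; rewrite (klinearZ _ _ S_lin) epsZ eps_mul mulrC.
Qed.

Lemma comodule_coassoc_tlift (X : lmodType k) (T : H -> H -> A -> X) a :
  (forall g, kbilinear (T g)) -> (forall g' c, klinear (fun g => T g g' c)) ->
  tlift (fun g c => tlift (T g) (rho c)) (rho a)
  = tlift (fun h' a' => tlift (fun u' v' => T u' v' a') (Delta h')) (rho a).
Proof.
move=> hTl hTr.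
have hW : kbilinear (fun (g : H) (y : tensor_type H A) => tlift (T g) y).
  split => [y|g]; last exact: klinear_tlift.
  by apply: (klinear_tlift_param (F := fun z c' d' => T z c' d')) => u v.
have := congr1 (tlift (fun g y => tlift (T g) y)) (rho_coass a).
rewrite !(tlift_comp _ _ (klinear_tlift hW)) => hcoass.
transitivity (tlift (fun g c => tlift (fun g y => tlift (T g) y)
                (tt g (rho c))) (rho a)).
  by apply: eq_tlift => g c; rewrite (tlift_tt _ _ hW).
rewrite hcoass; apply: eq_tlift => u v; rewrite (tlift_comp _ _ (klinear_tlift hW)).
by apply: eq_tlift => c d; rewrite (tlift_tt _ _ hW) (tlift_tt _ _ (hTl c)).
Qed.

Definition ind_coact_pure (N : lmodType k) (h : H) (m : N)
  : tensor_type H (tensor_type H N) :=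
  tlift (fun h1 h2 => tt h1 (tt h2 m)) (Delta h).

Lemma kbilinear_tt_tt (N : lmodType k) (m : N) :
  kbilinear (fun h1 h2 : H => tt h1 (tt h2 m)).
Proof. by split => [h2|h1] c x y; [rewrite ttDl | rewrite ttDl ttDr]. Qed.

Lemma kbilinear_ind_coact_pure (N : lmodType k) : kbilinear (@ind_coact_pure N).
Proof.
split => [m|h] c x y.
  by rewrite /ind_coact_pure Delta_lin (klinear_tlift (kbilinear_tt_tt m)).
apply: (klinear_tlift_param (F := fun z h1 h2 => tt h1 (tt h2 z))).
by move=> h1 h2 c' u v; rewrite !ttDr.
Qed.

Lemma ind_coactE (N : rmod A) (x : tensor_type H N) :
  ind_coact Delta x = tlift (@ind_coact_pure N) x.
Proof. by []. Qed.

Lemma klinear_ind_coact (N : rmod A) : klinear (ind_coact Delta (M:=N)).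
Proof. exact: klinear_tlift (kbilinear_ind_coact_pure _). Qed.

Lemma ind_coact_pureM (N : lmodType k) h h' (n : N) :
  ind_coact_pure (h * h') n = tlift (fun u v => tlift (fun u' v' =>
    tt (u * u') (tt (v * v') n)) (Delta h')) (Delta h).
Proof.
rewrite /ind_coact_pure Delta_mul /tmul (tlift_tlift _ _ (kbilinear_tt_tt n)).
apply: eq_tlift => u v; rewrite (tlift_tlift _ _ (kbilinear_tt_tt n)).
by apply: eq_tlift => u' v'; rewrite (tlift_tt _ _ (kbilinear_tt_tt n)).
Qed.

Lemma ind_coact_act (M : rmod A) x a :
  ind_coact Delta (ind_act rho x a)
  = ind_act rho (M := ind_rmod M) (ind_coact Delta x) a.
Proof.
rewrite (ind_actE x a) (tlift_comp _ _ (klinear_ind_coact (N:=M))) ind_coactE.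
rewrite (tlift_comp _ _ (klinear_ind_actl (M:=ind_rmod M) a)).
apply: eq_tlift => h m.
rewrite /ind_act_pure (tlift_comp _ _ (klinear_ind_coact (N:=M))).
under eq_tlift do rewrite ind_coactE
  (tlift_tt _ _ (kbilinear_ind_coact_pure M)) ind_coact_pureM.
rewrite exchange_tlift /ind_coact_pure.
rewrite (tlift_comp _ _ (klinear_ind_actl (M:=ind_rmod M) a)).
apply: eq_tlift => u v; rewrite (ind_act_tt (M:=ind_rmod M)) /ind_act_pure /=.
under [RHS]eq_tlift do rewrite ind_act_tt (tlift_comp _ _ (klinear_ttr _)).
rewrite (comodule_coassoc_tlift
  (T := fun g g' c' => tt (u * g) (tt (v * g') (rm_act m c')))) //.
- move=> g; split => [c'|g'] z w w'.
    by rewrite mulrDr -scalerAr ttDl ttDr.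
  by rewrite actDr !ttDr.
- by move=> g' c' z w w'; rewrite mulrDr -scalerAr ttDl.
Qed.

Lemma ind_coact_coassoc (M : rmod A) x :
  ind_coact Delta (M := ind_rmod M) (ind_coact Delta x)
  = idtens (H:=H) (ind_coact Delta (M:=M)) (ind_coact Delta x).
Proof.
rewrite [ind_coact Delta x]ind_coactE.
rewrite (tlift_comp _ _ (klinear_ind_coact (N:=ind_rmod M))).
rewrite (tlift_comp _ _ (klinear_idtens (klinear_ind_coact (N:=M)))).
apply: eq_tlift => h m.
rewrite {1}/ind_coact_pure (tlift_comp _ _ (klinear_ind_coact (N:=ind_rmod M))).
rewrite /ind_coact_pure (tlift_comp _ _ (klinear_idtens (klinear_ind_coact (N:=M)))).
under eq_tlift do rewrite ind_coactE (tlift_tt _ _ (kbilinear_ind_coact_pure _)).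
under [RHS]eq_tlift do rewrite (idtens_tt (klinear_ind_coact (N:=M))) ind_coactE
  (tlift_tt _ _ (kbilinear_ind_coact_pure _)) /ind_coact_pure
  (tlift_comp _ _ (klinear_ttr _)).
rewrite (coassoc_tlift (T := fun c d b => tt c (tt d (tt b m)))) //.
  by move=> c; split => [b|d] z w w'; [rewrite ttDl ttDr | rewrite ttDl !ttDr].
by move=> d b z w w'; rewrite ttDl.
Qed.

Lemma ind_hom_ind_coact (M : rmod A) :
  ind_hom Delta rho (N := ind_rmod M) (ind_coact Delta (M:=M)).
Proof.
split=> [|x a|x]; first exact: klinear_ind_coact.
  by rewrite ind_coact_act.
by rewrite ind_coact_coassoc.
Qed.

Lemma idtens_eps_tens_ind_coact (M : rmod A) (x : tensor_type H M) :
  idtens (H:=H) (eps_tens (M:=M)) (ind_coact Delta x) = x.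
Proof.
rewrite ind_coactE (tlift_comp _ _ (klinear_idtens (klinear_eps_tens (M:=M)))).
rewrite -[RHS](tlift_tt_id x); apply: eq_tlift => h m.
rewrite /ind_coact_pure (tlift_comp _ _ (klinear_idtens (klinear_eps_tens (M:=M)))).
under eq_tlift do
  rewrite (idtens_tt (klinear_eps_tens (M:=M))) eps_tens_tt ttZr -ttZl.
by rewrite -(tlift_comp _ _ (klinear_ttl _)) counitR.
Qed.

Lemma ind_coact_idtens (M N : rmod A) (g : M -> N) x : klinear g ->
  ind_coact Delta (idtens (H:=H) g x)
  = idtens (H:=H) (idtens (H:=H) g) (ind_coact Delta x).
Proof.
move=> hg.
rewrite {1}/idtens (tlift_comp _ _ (klinear_ind_coact (N:=N))).
rewrite ind_coactE (tlift_comp _ _ (klinear_idtens (klinear_idtens hg))).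
apply: eq_tlift => h m.
rewrite ind_coactE (tlift_tt _ _ (kbilinear_ind_coact_pure _)) /ind_coact_pure.
rewrite (tlift_comp _ _ (klinear_idtens (klinear_idtens hg))).
by apply: eq_tlift => u v; rewrite (idtens_tt (klinear_idtens hg)) (idtens_tt hg).
Qed.

(** * Hopf Galois extensions *)

Local Notation A_A := (regular_rmod A).

Section Retraction.
Variable P : forall M N : rmod A, (tensor_type H M -> tensor_type H N) -> M -> N.
Hypothesis P_hom : forall (M N : rmod A) (phi : tensor_type H M -> tensor_type H N),
  ind_hom Delta rho phi -> amod_hom (@P M N phi).
Hypothesis P_idtens : forall (M N : rmod A) (f : M -> N), amod_hom f ->
  forall m, @P M N (idtens (H:=H) f) m = f m.
Hypothesis P_natural : forall (M' M N N' : rmod A) (g : M' -> M) (h : N -> N')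
    (phi : tensor_type H M -> tensor_type H N),
  amod_hom g -> amod_hom h -> ind_hom Delta rho phi ->
  forall m, @P M' N' (fun x => idtens (H:=H) h (phi (idtens (H:=H) g x))) m
            = h (@P M N phi (g m)).

Definition coaction_retract : A -> tensor_type H A :=
  @P A_A (ind_rmod A_A) (ind_coact Delta (M:=A_A)).

Lemma amod_hom_coaction_retract :
  amod_hom (M := A_A) (N := ind_rmod A_A) coaction_retract.
Proof. exact: P_hom (ind_hom_ind_coact A_A). Qed.

Lemma eps_tens_coaction_retract a : eps_tens (coaction_retract a) = a.
Proof.
have := P_natural (amod_hom_id A_A) (amod_hom_eps_tens A_A)
                  (ind_hom_ind_coact A_A) a.
rewrite idtens_id.
under eq_fun do rewrite idtens_eps_tens_ind_coact.
by rewrite -[fun x => x](idtens_id H) P_idtens //; exact: amod_hom_id.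
Qed.

Lemma coaction_retract_mull a b :
  coaction_retract (a * b) = idtens (H:=H) (fun y : A => a * y) (coaction_retract b).
Proof.
have hl := P_natural (amod_hom_id A_A) (amod_hom_idtens (amod_hom_mull a))
                     (ind_hom_ind_coact A_A) b.
have hr := P_natural (amod_hom_mull a) (amod_hom_id _) (ind_hom_ind_coact A_A) b.
rewrite idtens_id in hl; rewrite idtens_id in hr.
rewrite -[LHS]hr -[RHS]hl; f_equal.
by apply: funext => x; rewrite ind_coact_idtens //; case: (amod_hom_mull a).
Qed.

End Retraction.

Definition central_in_ind (x : tensor_type H A) : Prop :=
  forall a, ind_act rho (M := A_A) x a = idtens (H:=H) (fun y : A => a * y) x.

Lemma ind_separable_central_element : ind_separable Delta rho ->
  exists2 x, central_in_ind x & eps_tens x = 1.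
Proof.
case=> P [P_hom P_idtens P_natural].
exists (coaction_retract P 1); last exact: eps_tens_coaction_retract.
move=> a; case: (amod_hom_coaction_retract P_hom) => _ hact.
have := hact 1 a; rewrite /= mul1r => <-.
by rewrite -(coaction_retract_mull P_natural) mulr1.
Qed.

Lemma kbilinear_tt_mul (U V : algType k) (u : U) (v : V) :
  kbilinear (fun (h : U) (c : V) => tt (u * h) (v * c)).
Proof. by split => [c|h] z x y; rewrite mulrDr -scalerAr ?ttDl ?ttDr. Qed.

Lemma kbilinear_tt_mulr (q : A) : kbilinear (fun (h : H) (c : A) => tt h (c * q)).
Proof. by split => [c|h] z x y; rewrite ?ttDl // mulrDl -scalerAl ttDr. Qed.

Lemma kbilinear_tt_mul_antipode (u : H) :
  kbilinear (fun (h : H) (b : A) => tt (u * S h) b).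
Proof.
by split => [b|h] z x y; [rewrite S_lin mulrDr -scalerAr ttDl | rewrite ttDr].
Qed.

Lemma klinear_tmul (w : tensor_type H A) : klinear (tmul w).
Proof.
apply: (klinear_tlift_param
  (F := fun z u v => tlift (fun h c => tt (u * h) (v * c)) z)) => u v.
exact: klinear_tlift (kbilinear_tt_mul u v).
Qed.

Lemma tmul_mulr (w z : tensor_type H A) q :
  tlift (fun h c => tt h (c * q)) (tmul w z)
  = tmul w (tlift (fun h c => tt h (c * q)) z).
Proof.
rewrite /tmul (tlift_comp _ _ (klinear_tlift (kbilinear_tt_mulr q))).
apply: eq_tlift => u v.
rewrite (tlift_comp _ _ (klinear_tlift (kbilinear_tt_mulr q))).
rewrite (tlift_tlift _ _ (kbilinear_tt_mul u v)); apply: eq_tlift => h c.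
by rewrite (tlift_tt _ _ (kbilinear_tt_mulr q)) (tlift_tt _ _ (kbilinear_tt_mul u v)) mulrA.
Qed.

Definition antipode_twist (x : tensor_type H A) : tensor_type H A :=
  tlift (fun h b => tt (S h) b) x.

Lemma tmul_rho_antipode_twist x a : central_in_ind x ->
  tmul (rho a) (antipode_twist x)
  = tlift (fun u v => tlift (fun h b => tlift (fun g c =>
      tt (u * S g * S h) (b * c)) (rho v)) x) (rho a).
Proof.
move=> xC; rewrite /tmul; apply: eq_tlift => u v.
rewrite /antipode_twist (tlift_tlift _ _ (kbilinear_tt_mul u v)).
transitivity (tlift (fun h b => tt (u * S h) b)
                (idtens (H:=H) (fun y : A => v * y) x)).
  rewrite /idtens (tlift_tlift _ _ (kbilinear_tt_mul_antipode u)).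
  apply: eq_tlift => h b.
  by rewrite (tlift_tt _ _ (kbilinear_tt_mul u v))
             (tlift_tt _ _ (kbilinear_tt_mul_antipode u)).
rewrite -xC ind_actE (tlift_comp _ _ (klinear_tlift (kbilinear_tt_mul_antipode u))).
apply: eq_tlift => h b.
rewrite /ind_act_pure (tlift_tlift _ _ (kbilinear_tt_mul_antipode u)).
apply: eq_tlift => g c.
by rewrite (tlift_tt _ _ (kbilinear_tt_mul_antipode u)) antipodeM mulrA.
Qed.

Lemma sum_rho_antipode (h : H) (b a : A) :
  tlift (fun u v => tlift (fun g c => tt (u * S g * S h) (b * c)) (rho v)) (rho a)
  = tt (S h) (b * a).
Proof.
rewrite (comodule_coassoc_tlift (T := fun u g c => tt (u * S g * S h) (b * c)));
  first last.
- by move=> g c z u v; linsimp.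
- by move=> u; split => [c|g] z w w'; linsimp.
transitivity (tlift (fun h' a' => tt (S h) (b * (eps h' *: a'))) (rho a)).
  apply: eq_tlift => h' a'.
  transitivity ((fun z => tt (z * S h) (b * a'))
                  (tlift (fun u' v' => u' * S v') (Delta h'))).
    rewrite (tlift_comp (fun u' v' => u' * S v') _
               (g := fun z => tt (z * S h) (b * a'))) //.
    by move=> z w w'; rewrite mulrDl -scalerAl ttDl.
  by rewrite /= antiR -scalerAl mul1r ttZl -ttZr -scalerAr.
rewrite -[in RHS](rho_counit a) (tlift_comp _ _ (g := fun z => tt (S h) (b * z))) //.
by move=> z w w'; rewrite mulrDr -scalerAr ttDr.
Qed.

Lemma tmul_rho_antipode_twist_central x a : central_in_ind x ->
  tmul (rho a) (antipode_twist x)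
  = tlift (fun h c => tt h (c * a)) (antipode_twist x).
Proof.
move=> xC; rewrite tmul_rho_antipode_twist // exchange_tlift.
rewrite /antipode_twist (tlift_tlift _ _ (kbilinear_tt_mulr a)).
apply: eq_tlift => h b.
by rewrite (tlift_tt _ _ (kbilinear_tt_mulr a)) sum_rho_antipode.
Qed.

Lemma can_map_mull (s : seq (A * A)) a :
  can_map rho [seq (a * p.1, p.2) | p <- s] = tmul (rho a) (can_map rho s).
Proof.
rewrite /can_map big_map (klinear_sum _ _ (klinear_tmul _)).
by apply: eq_bigr => p _; rewrite rho_mul tmul_mulr.
Qed.

Lemma can_map_mulr (s : seq (A * A)) a :
  can_map rho [seq (p.1, p.2 * a) | p <- s]
  = tlift (fun h c => tt h (c * a)) (can_map rho s).
Proof.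
rewrite /can_map big_map (klinear_sum _ _ (klinear_tlift (kbilinear_tt_mulr a))).
apply: eq_bigr => p _; rewrite (tlift_tlift _ _ (kbilinear_tt_mulr a)).
by apply: eq_tlift => h c; rewrite (tlift_tt _ _ (kbilinear_tt_mulr a)) mulrA.
Qed.

Lemma eps_tens_can_map (s : seq (A * A)) :
  eps_tens (can_map rho s) = \sum_(p <- s) p.1 * p.2.
Proof.
rewrite /can_map (klinear_sum _ _ (klinear_eps_tens (M:=A))).
apply: eq_bigr => p _.
rewrite -{2}(rho_counit p.1) (tlift_comp _ _ (klinear_mulr _)).
rewrite (tlift_comp _ _ (klinear_eps_tens (M:=A))).
by apply: eq_tlift => h c; rewrite eps_tens_tt scalerAl.
Qed.

Lemma central_element_separable_ext x : hopf_galois rho ->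
  central_in_ind x -> eps_tens x = 1 -> separable_ext rho.
Proof.
move=> [can_inj can_surj] xC x_eps.
have [s hs] := can_surj (antipode_twist x).
exists s; split=> [a|].
  by apply: can_inj; rewrite can_map_mull can_map_mulr hs
                             tmul_rho_antipode_twist_central.
rewrite -eps_tens_can_map hs -x_eps /antipode_twist.
rewrite (tlift_comp _ _ (klinear_eps_tens (M:=A))); apply: eq_tlift => h b.
by rewrite !eps_tens_tt eps_antipode.
Qed.

Lemma ind_separable_separable_ext :
  hopf_galois rho -> ind_separable Delta rho -> separable_ext rho.
Proof.
move=> galois /ind_separable_central_element [x xC x_eps].
exact: central_element_separable_ext galois xC x_eps.
Qed.

End HopfComodule.

Theorem theorem3p1p5 (k : comPzRingType) (H : algType k)
    (Delta : H -> tensor_type H H) (eps : H -> k) (S : H -> H)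
    (A : algType k) (rho : A -> tensor_type H A) :
  is_hopf_algebra Delta eps S ->
  kflat H ->
  is_comodule_algebra Delta eps rho ->
  (separable_ext rho -> ind_separable Delta rho) /\
  (hopf_galois rho -> ind_separable Delta rho -> separable_ext rho).
Proof.
move=> [[Dl el Sl] coass [cL cR] [Dm _ em e1] [aL aR]] _ [rl rcoass rcount rm r1].
split; first exact: separable_ext_ind_separable.
exact: ind_separable_separable_ext.
Qed.
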